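(* Let $g$ be either $F$, or $F_{\cdot,c}$ for some fixed $c\in\mathbb{C}^d$, or $f$ in the case $s=n$, with respective parameter spaces $\mathbb{C}^r\times\mathbb{C}^d$, $\mathbb{C}^r$, $\mathbb{C}^r$. If $g_{\alpha^*}(x)=0$ has a nondegenerate solution in $(\mathbb{C}^* )^n$ for some parameter value $\alpha^*$, then there is a nonempty Zariski open subset of the parameter space such that for all $\alpha$ in it, all solutions in $(\mathbb{C}^* )^n$ of $g_\alpha(x)=0$ are nondegenerate.
   Context: Let $N\in\mathbb{C}^{s\times r}$ have rank $s$, $W\in\mathbb{C}^{d\times n}$ have rank $d=n-s$, $B\in\mathbb{Z}^{n\times r}$. $\circ$ is the Hadamard product and $x^B\in\mathbb{C}^r$ has $j$-th entry $\prod_i x_i^{b_{ij}}$. $f(\kappa,x)=N(\kappa\circ x^B)$ with parameters $\kappa\in\mathbb{C}^r$; $F(\kappa,c,x)=\begin{pmatrix}f(\kappa,x)\\ Wx-c\end{pmatrix}$ with parameters $(\kappa,c)\in\mathbb{C}^r\times\mathbb{C}^d$; $F_{\cdot,c}(\kappa,x)=F(\kappa,c,x)$ for fixed $c$, with parameters $\kappa$. For a parametric system $g$ with $t$ equations, $g_\alpha=g(\alpha,\cdot)$, and a solution $x^*\in(\mathbb{C}^* )^n$ of $g_\alpha(x)=0$ is nondegenerate if the Jacobian of $g_\alpha$ with respect to $x$ at $x^*$ has rank $t$. *)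

From HB Require Import structures.
From mathcomp Require Import all_boot all_order all_algebra.
From mathcomp Require Import Rstruct.
From mathcomp Require Import complex.
From mathcomp Require Import mpoly.
Set Implicit Arguments. Unset Strict Implicit. Unset Printing Implicit Defensive.
Import GRing.Theory Num.Theory.
Local Open Scope ring_scope.

Definition C : numClosedFieldType := (Rdefinitions.R)[i].

Definition in_torus (n : nat) (x : 'cV[C]_n) : Prop := forall i, x i 0 != 0.

Definition monvec (n r : nat) (B : 'M[int]_(n, r)) (x : 'cV[C]_n) : 'cV[C]_r :=
  \col_j \prod_(i < n) (x i 0) ^ (B i j).

Definition dmon (n r : nat) (B : 'M[int]_(n, r)) (x : 'cV[C]_n) (j : 'I_r) (k : 'I_n) : C :=
  (B k j)%:~R * (x k 0) ^ (B k j - 1) * \prod_(i < n | i != k) (x i 0) ^ (B i j).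

(* f(kappa, x) = N (kappa o x^B) *)
Definition fsys (s r n : nat) (N : 'M[C]_(s, r)) (B : 'M[int]_(n, r))
  (kappa : 'cV[C]_r) (x : 'cV[C]_n) : 'cV[C]_s :=
  N *m (\col_j (kappa j 0 * monvec B x j 0)).

Definition Jf (s r n : nat) (N : 'M[C]_(s, r)) (B : 'M[int]_(n, r))
  (kappa : 'cV[C]_r) (x : 'cV[C]_n) : 'M[C]_(s, n) :=
  \matrix_(l, k) \sum_(j < r) N l j * kappa j 0 * dmon B x j k.

(* F(kappa, c, x) = (f(kappa, x) ; W x - c) *)
Definition Fsys (s r n d : nat) (N : 'M[C]_(s, r)) (W : 'M[C]_(d, n)) (B : 'M[int]_(n, r))
  (kappa : 'cV[C]_r) (c : 'cV[C]_d) (x : 'cV[C]_n) : 'cV[C]_(s + d) :=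
  col_mx (fsys N B kappa x) (W *m x - c).

Definition JF (s r n d : nat) (N : 'M[C]_(s, r)) (W : 'M[C]_(d, n)) (B : 'M[int]_(n, r))
  (kappa : 'cV[C]_r) (x : 'cV[C]_n) : 'M[C]_(s + d, n) :=
  col_mx (Jf N B kappa x) W.

(* Zariski open subsets of C^m: complements of common zero sets of finitely
   many polynomials, i.e. U = { a | p(a) <> 0 for some p in S }. *)
Definition zariski_open (m : nat) (U : 'cV[C]_m -> Prop) : Prop :=
  exists S : seq {mpoly C[m]},
    forall a : 'cV[C]_m, U a <-> has (fun p => p.@[fun i => a i 0] != 0) S.

(* A parametric system g with parameter space C^m, t equations in n unknowns,
   given together with its Jacobian Jg with respect to x. *)
Definition nondegenerate (m n t : nat)
  (Jg : 'cV[C]_m -> 'cV[C]_n -> 'M[C]_(t, n)) (alpha : 'cV[C]_m) (x : 'cV[C]_n) : Prop :=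
  \rank (Jg alpha x) = t.

Definition generically_nondegenerate (m n t : nat)
  (g : 'cV[C]_m -> 'cV[C]_n -> 'cV[C]_t)
  (Jg : 'cV[C]_m -> 'cV[C]_n -> 'M[C]_(t, n)) : Prop :=
  (exists (alpha0 : 'cV[C]_m) (x0 : 'cV[C]_n),
      in_torus x0 /\ g alpha0 x0 = 0 /\ nondegenerate Jg alpha0 x0) ->
  exists U : 'cV[C]_m -> Prop,
    zariski_open U /\ (exists a, U a) /\
    forall alpha, U alpha ->
      forall x, in_torus x -> g alpha x = 0 -> nondegenerate Jg alpha x.

From HB Require Import structures.
From mathcomp Require Import all_boot all_order all_algebra.
From mathcomp Require Import Rstruct complex mpoly.
From mathcomp Require Import zify ring.
Import Order.TTheory GRing.Theory Num.Theory.
Local Open Scope ring_scope.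

(* For each of the three systems g, the torus solutions admit a
   polynomial parametrization by a space of dimension at most that of the
   parameter space: writing kappa o x^B = mu Kb with Kb a basis of ker N, a
   solution is determined by mu and by x (or by a point of x0 + ker W for
   F_c), the parameters are rational functions kpol/qpol of these
   coordinates, and Jg(alpha, x) diag(x) is a polynomial matrix in them.
   If some solution is nondegenerate, a maximal minor D of this matrix is a
   nonzero polynomial and degenerate solutions lie over {D = 0}.  An
   elimination lemma, proved by linear algebra and degree counting, gives a
   nonzero polynomial P on the parameter space vanishing on the image of
   {D = 0}; the Zariski open set {P != 0} is nonempty since nonzero
   polynomials over C have non-roots. *)

Section LastVariable.
Variables (R : comNzRingType) (n : nat).
Local Notation wid := (widen_ord (leqnSn n)).

Definition mshr (m : 'X_{1..n.+1}) : 'X_{1..n} := [multinom m (wid i) | i < n].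

Definition cpol (P : {mpoly R[n.+1]}) (e : nat) : {mpoly R[n]} :=
  \sum_(m <- msupp P | m ord_max == e) P@_m *: 'X_[mshr m].

Lemma mshr_inj (m1 m2 : 'X_{1..n.+1}) :
  mshr m1 = mshr m2 -> m1 ord_max = m2 ord_max -> m1 = m2.
Proof.
move=> /mnmP h hmax; apply/mnmP => i.
case: (unliftP ord_max i) => [j ->|->] //.
have -> : lift ord_max j = wid j by apply/val_inj; rewrite /= /bump leqNgt ltn_ord.
by have := h j; rewrite !mnmE.
Qed.

Lemma max_lt_msize {P : {mpoly R[n.+1]}} {m} :
  m \in msupp P -> (m ord_max < msize P)%N.
Proof.
move=> /msize_mdeg_lt; apply: leq_ltn_trans.
by rewrite mdegE (bigD1 ord_max) //= leq_addr.
Qed.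

Lemma meval_cpol (P : {mpoly R[n.+1]}) (v : 'I_n.+1 -> R) :
  P.@[v] = \sum_(e < msize P) (cpol P e).@[fun i => v (wid i)] * v ord_max ^+ e.
Proof.
rewrite mevalE.
have E e : (cpol P e).@[fun i => v (wid i)] * v ord_max ^+ e =
   \sum_(m <- msupp P) (if m ord_max == e then
       P@_m * \prod_(i < n.+1) v i ^+ m i else 0).
  rewrite /cpol rmorph_sum /= mulr_suml big_mkcond /=; apply: eq_bigr => m _.
  case: eqP => // <-; rewrite mevalZ mevalX big_ord_recr /= -mulrA.
  by congr (_ * (_ * _)); apply: eq_bigr => i _; rewrite mnmE.
rewrite (eq_bigr _ (fun (e : 'I_(msize P)) _ => E e)) exchange_big /=.
rewrite [LHS]big_seq [RHS]big_seq; apply: eq_bigr => m mP.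
rewrite (bigD1 (Ordinal (max_lt_msize mP))) //= eqxx [X in _ + X]big1 ?addr0 //.
by move=> e; rewrite -val_eqE /= eq_sym => /negbTE ->.
Qed.

Lemma cpol_neq0 (P : {mpoly R[n.+1]}) : P != 0 ->
  exists2 e, (e < msize P)%N & cpol P e != 0.
Proof.
rewrite -msupp_eq0; case E: (msupp P) => [|m0 ?] // _.
have m0P : m0 \in msupp P by rewrite E inE eqxx.
exists (m0 ord_max); first exact: max_lt_msize.
apply/eqP => /(congr1 (mcoeff (mshr m0))); rewrite mcoeff0 /cpol raddf_sum /=.
rewrite big_mkcond (bigD1_seq m0) ?msupp_uniq //= eqxx mcoeffZ mcoeffX eqxx mulr1.
rewrite [X in _ + X]big1 ?addr0; first by apply/eqP; rewrite mcoeff_eq0 negbK.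
move=> m hne; case: eqP => // hmx; rewrite mcoeffZ mcoeffX.
case: eqP => [h|]; last by rewrite mulr0.
by case/eqP: hne; apply: mshr_inj.
Qed.

End LastVariable.
Arguments cpol {R n}.
Arguments cpol_neq0 {R n P}.

(* Over a numeric (hence characteristic zero) domain, a nonzero polynomial
   function does not vanish identically: univariate case first (it has finitely many roots
   but there are infinitely many naturals), then induction on the number of
   variables via cpol. *)
Section NonRoot.
Variable R : numDomainType.

Lemma poly_nonroot {p : {poly R}} : p != 0 -> exists t, ~~ root p t.
Proof.
move=> p0; pose rs := [seq (i%:R : R) | i <- iota 0 (size p)].
have rs_uniq : uniq rs.
  by rewrite map_inj_uniq ?iota_uniq // => i j /eqP; rewrite eqr_nat => /eqP.
have : ~~ all (root p) rs.
  apply/negP => /(max_poly_roots p0)/(_ rs_uniq).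
  by rewrite size_map size_iota ltnn.
by case/allPn => t _ ?; exists t.
Qed.

Lemma mpoly_nonroot (n : nat) (P : {mpoly R[n]}) : P != 0 ->
  exists v : 'I_n -> R, P.@[v] != 0.
Proof.
elim: n P => [|n IH] P P0.
  exists (fun i => 0).
  have -> : P = (P@_0%MM)%:MP.
    apply: msize1_polyC; rewrite msizeE; apply/bigmax_leqP_seq => m _ _.
    by rewrite ltnS leqn0 mdegE big_ord0.
  rewrite mevalC; apply: contra P0 => /eqP h.
  apply/eqP/mpolyP => m; rewrite mcoeff0.
  by have -> : m = 0%MM by apply/mnmP => -[].
have [e eS ce] := cpol_neq0 P0.
have [w hw] := IH _ ce.
pose p := \poly_(k < msize P) (cpol P k).@[w].
have p0 : p != 0.
  apply: contraNneq hw => /(congr1 (fun q : {poly R} => q`_e)).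
  by rewrite /= coef_poly eS coef0 => ->.
have [t ht] := poly_nonroot p0.
pose v (i : 'I_n.+1) := if insub (val i) is Some j then w j else t.
exists v; rewrite meval_cpol.
have hv : (fun i : 'I_n => v (widen_ord (leqnSn n) i)) =1 w.
  move=> i; rewrite /v insubT /=; first by rewrite ltn_ord.
  by move=> h; congr w; apply: val_inj.
under eq_bigr do rewrite (meval_eq _ hv).
have -> : v ord_max = t by rewrite /v insubF //= ltnn.
move: ht; rewrite /root horner_poly.
by under eq_bigr do rewrite mulrC.
Qed.

End NonRoot.
Arguments mpoly_nonroot {R n P}.

Section DegreeBounds.
Variables (R : idomainType) (m : nat).
Implicit Types (f g : {mpoly R[m]}).

Lemma msizeM_bnd f g a b : (msize f <= a.+1)%N -> (msize g <= b.+1)%N ->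
  (msize (f * g) <= (a + b).+1)%N.
Proof.
have [->|f0] := eqVneq f 0; first by rewrite mul0r msize0.
have [->|g0] := eqVneq g 0; first by rewrite mulr0 msize0.
rewrite msizeM //.
have := msize_poly_eq0 f; have := msize_poly_eq0 g.
rewrite (negbTE f0) (negbTE g0); lia.
Qed.

Lemma msizeX_bnd f a k : (msize f <= a.+1)%N -> (msize (f ^+ k) <= (a * k).+1)%N.
Proof.
move=> hf; elim: k => [|k IH]; first by rewrite expr0 msize1 muln0.
by rewrite exprS mulnS; apply: msizeM_bnd.
Qed.

Lemma msize_prod_bnd (I : Type) (r : seq I) (F : I -> {mpoly R[m]}) (a : I -> nat) :
  (forall i, msize (F i) <= (a i).+1)%N ->
  (msize (\prod_(i <- r) F i) <= (\sum_(i <- r) a i).+1)%N.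
Proof.
move=> h; elim: r => [|x r IH]; first by rewrite !big_nil msize1.
by rewrite !big_cons; apply: msizeM_bnd.
Qed.

End DegreeBounds.
Arguments msizeM_bnd {R m f g a b}.
Arguments msizeX_bnd {R m f a} k.
Arguments msize_prod_bnd {R m I} r {F a}.

Lemma msize_homog_bnd (R : idomainType) (m k a K t : nat) (p : 'I_k -> {mpoly R[m]})
    (q D : {mpoly R[m]}) (e : 'I_k -> nat) :
  (forall i, msize (p i) <= a.+1)%N -> (msize q <= a.+1)%N ->
  (msize D <= a.+1)%N -> (\sum_i e i <= K)%N ->
  (msize ((\prod_i p i ^+ e i) * q ^+ (K - \sum_i e i) * D ^+ t) <= (a * (K + t)).+1)%N.
Proof.
move=> hp hq hD eK.
have hprod := msize_prod_bnd (index_enum 'I_k) (fun i => msizeX_bnd (e i) (hp i)).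
apply: leq_trans (msizeM_bnd (msizeM_bnd hprod (msizeX_bnd _ hq)) (msizeX_bnd t hD)) _.
by rewrite -big_distrr /= -!mulnDr subnKC.
Qed.
Arguments msize_homog_bnd {R m k a K} t {p q D e}.

Lemma exponent_count (m1 m2 a k : nat) :
  (m1 <= m2)%N -> k = ((m2.+1 * a).+1 ^ m1)%N ->
  ((a * (m2.+1 * k)).+1 ^ m1 < k.+1 ^ m2 * k.+1)%N.
Proof.
move=> m12 def_k; set c := (m2.+1 * a).+1 in def_k.
have base : ((a * (m2.+1 * k)).+1 <= c * k.+1)%N by rewrite /c; nia.
have pow e : ((a * (m2.+1 * k)).+1 ^ e <= (c * k.+1) ^ e)%N.
  by elim: e => // e IH; rewrite !expnS leq_mul.
apply: leq_ltn_trans (pow m1) _; rewrite expnMn -def_k.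
apply: (@leq_trans (k.+1 * k.+1 ^ m1)); first by rewrite ltn_mul2r expn_gt0 /= ltnSn.
by rewrite mulnC leq_mul2r leq_pexp2l ?orbT.
Qed.

Section Elimination.
Variable R : fieldType.

Lemma mpoly_lin_dependent (m T : nat) (I : finType) (G : I -> {mpoly R[m]}) :
  (forall i, msize (G i) <= T.+1)%N -> (T.+1 ^ m < #|I|)%N ->
  exists2 u : I -> R, (exists i, u i != 0) & \sum_i u i *: G i = 0.
Proof.
move=> GT cardI.
pose Cod := {ffun 'I_m -> 'I_T.+1}.
pose mono (f : Cod) : 'X_{1..m} := [multinom (f i : nat) | i < m].
pose A : 'M[R]_(#|I|, #|{: Cod}|) :=
  \matrix_(i, j) (G (enum_val i))@_(mono (enum_val j)).
have : kermx A != 0.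
  rewrite kermx_eq0 /row_free; apply: contraTneq cardI => hr.
  by have := rank_leq_col A; rewrite hr card_ffun !card_ord leqNgt.
case/rowV0Pn => v /sub_kermxP vA v0.
exists (fun x => v 0 (enum_rank x)).
  have /existsP[i vi] : [exists i, v 0 i != 0].
    apply: contraR v0 => /existsPn v_eq0; apply/eqP/rowP => i.
    by rewrite mxE; apply/eqP/negPn/v_eq0.
  by exists (enum_val i); rewrite enum_valK.
apply/mpolyP => mm; rewrite mcoeff0 raddf_sum /=.
under eq_bigr do rewrite mcoeffZ.
rewrite (reindex (fun i : 'I_#|I| => enum_val i)) /=; last first.
  by apply: onW_bij; apply: enum_val_bij.
case: (boolP [forall i, (mm i <= T)%N]) => hbox.
  pose f : Cod := [ffun i => inord (mm i)].
  have -> : mm = mono f.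
    apply/mnmP => i; rewrite mnmE ffunE inordK //.
    by rewrite ltnS; apply: (forallP hbox).
  have := congr1 (fun M : 'rV[R]_#|{: Cod}| => M 0 (enum_rank f)) vA.
  rewrite !mxE => kerf; apply: etrans kerf; apply: eq_bigr => i _.
  by rewrite enum_valK mxE enum_rankK.
apply: big1 => i _.
case/forallPn: hbox => l; rewrite -ltnNge => hl.
rewrite memN_msupp_eq0 ?mulr0 //; apply: msize_mdeg_ge.
apply: (leq_trans (GT _)); apply: (leq_trans hl).
by rewrite mdegE (bigD1 l) //= leq_addr.
Qed.

Lemma lowest_order_relation (m : nat) (I : finType) (H : I -> {mpoly R[m]})
    (e : I -> nat) (u : I -> R) (D : {mpoly R[m]}) :
  D != 0 -> (exists i, u i != 0) -> \sum_i u i *: (H i * D ^+ e i) = 0 ->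
  exists j, (exists i, (u i != 0) && (e i == j)) /\
    forall y, D.@[y] = 0 -> \sum_(i | e i == j) u i * (H i).@[y] = 0.
Proof.
move=> D0 [i0 ui0] rel.
have exj : exists j, [exists i, (u i != 0) && (e i == j)].
  by exists (e i0); apply/existsP; exists i0; rewrite ui0 eqxx.
have [j /existsP ej jmin] := ex_minnP exj.
have le_j i : u i != 0 -> (j <= e i)%N.
  by move=> ui; apply: jmin; apply/existsP; exists i; rewrite ui eqxx.
pose Q := \sum_i u i *: (H i * D ^+ (e i - j)).
have Q0 : Q = 0.
  apply/eqP; rewrite -(mulIr_eq0 _ (mulIf (expf_neq0 j D0))) -rel mulr_suml.
  apply/eqP/eq_bigr => i _; have [->|ui] := eqVneq (u i) 0; first by rewrite !scale0r mul0r.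
  by rewrite -scalerAl -mulrA -exprD subnK ?le_j.
exists j; split=> // y Dy.
rewrite -[RHS](meval0 y) -Q0 rmorph_sum /= [RHS](bigID (fun i => e i == j)) /=.
rewrite [X in _ = _ + X]big1 ?addr0 => [|i /negbTE eij].
  by apply: eq_bigr => i /eqP eij; rewrite mevalZ mevalM rmorphXn /= eij subnn expr0 mulr1.
rewrite mevalZ mevalM rmorphXn /= Dy expr0n.
have [->|ui] := eqVneq (u i) 0; first by rewrite mul0r.
by rewrite subn_eq0 leqNgt ltn_neqAle eq_sym eij le_j // !mulr0.
Qed.

Lemma meval_homogenize (m k K : nat) (p : 'I_k -> {mpoly R[m]}) (q : {mpoly R[m]})
    (e : 'I_k -> nat) (y : 'I_m -> R) :
  (\sum_l e l <= K)%N -> q.@[y] != 0 ->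
  ((\prod_l p l ^+ e l) * q ^+ (K - \sum_l e l)).@[y] =
  q.@[y] ^+ K * 'X_[[multinom e l | l < k]].@[fun l => (p l).@[y] / q.@[y]].
Proof.
move=> eK qy; rewrite mevalM rmorphXn rmorph_prod mevalX /=.
under [in RHS]eq_bigr do rewrite mnmE expr_div_n.
rewrite prodf_div prodrXr -[in RHS](subnK eK) exprD -mulrA [_ * (_ / _)]mulrC.
rewrite divfK ?expf_neq0 // mulrC; congr (_ * _).
by apply: eq_bigr => l _; rewrite rmorphXn.
Qed.

Lemma monomial_comb_neq0 (m : nat) (I : finType) (S : pred I) (mz : I -> 'X_{1..m})
    (u : I -> R) (i1 : I) :
  {in S &, injective mz} -> S i1 -> u i1 != 0 -> \sum_(i | S i) u i *: 'X_[mz i] != 0.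
Proof.
move=> mz_inj Si1 ui1; apply: contra ui1 => /eqP/(congr1 (mcoeff (mz i1))).
rewrite mcoeff0 raddf_sum /= (bigD1 i1) //= mcoeffZ mcoeffX eqxx mulr1.
rewrite big1 ?addr0 => [-> //|i /andP[Si ne]]; rewrite mcoeffZ mcoeffX.
by case: eqP => [/(mz_inj _ _ Si Si1) /eqP|]; rewrite ?(negbTE ne) ?mulr0.
Qed.

Arguments mpoly_lin_dependent {m T I G}.
Arguments lowest_order_relation {m I H e u D}.
Arguments meval_homogenize {m k K p q e y}.

(* P is found by linear algebra: the polynomials
   p^e q^(K-|e|) D^t, for bounded exponents (e, t), outnumber the monomials
   of their degree, so they satisfy a linear relation; its part of lowest
   D-order is the homogenization of P. *)
Lemma image_in_hypersurface (m1 m2 : nat) (p : 'I_m2 -> {mpoly R[m1]})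
    (q D : {mpoly R[m1]}) :
  (m1 <= m2)%N -> D != 0 ->
  exists P : {mpoly R[m2]}, P != 0 /\
   forall y : 'I_m1 -> R, q.@[y] != 0 -> D.@[y] = 0 ->
     P.@[fun i => (p i).@[y] / q.@[y]] = 0.
Proof.
move=> m12 D0.
pose a := maxn (\max_(i < m2) msize (p i)) (maxn (msize q) (msize D)).
have hpa i : (msize (p i) <= a.+1)%N.
  by apply: leqW; apply: leq_trans (leq_maxl _ _); apply: (leq_bigmax i).
have hqa : (msize q <= a.+1)%N by rewrite /a; lia.
have hDa : (msize D <= a.+1)%N by rewrite /a; lia.
pose k := ((m2.+1 * a).+1 ^ m1)%N; pose K := (m2 * k)%N.
pose T := (a * (m2.+1 * k))%N.
pose Dom := ({ffun 'I_m2 -> 'I_k.+1} * 'I_k.+1)%type.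
pose ez (e : Dom) (i : 'I_m2) : nat := e.1 i.
pose et (e : Dom) : nat := e.2.
pose sz (e : Dom) : nat := (\sum_(i < m2) ez e i)%N.
have szK e : (sz e <= K)%N.
  rewrite /K -[m2 in (m2 * k)%N]card_ord -sum_nat_const.
  by apply: leq_sum => i _; rewrite /ez -ltnS ltn_ord.
pose H (e : Dom) : {mpoly R[m1]} := (\prod_(i < m2) p i ^+ ez e i) * q ^+ (K - sz e).
have HT e : (msize (H e * D ^+ et e) <= T.+1)%N.
  apply: leq_trans (msize_homog_bnd (et e) hpa hqa hDa (szK e)) _.
  by rewrite ltnS leq_mul2l; have := ltn_ord e.2; rewrite /K /et; lia.
have cardDom : (T.+1 ^ m1 < #|{: Dom}|)%N.
  by rewrite card_prod card_ffun !card_ord; apply: exponent_count.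
have [u u0 rel] := mpoly_lin_dependent HT cardDom.
have [j [[e1 /andP[ue1 e1j]] vanish]] := lowest_order_relation D0 u0 rel.
pose mz (e : Dom) : 'X_{1..m2} := [multinom (ez e i) | i < m2].
exists (\sum_(e | et e == j) u e *: 'X_[mz e]); split.
  apply: monomial_comb_neq0 e1j ue1 => -[f1 o1] [f2 o2] /eqP /= o1j /eqP o2j /mnmP same.
  congr (_, _); last by apply: ord_inj; move: o1j o2j; rewrite /et /= => -> ->.
  by apply/ffunP => l; apply: val_inj; have := same l; rewrite !mnmE.
move=> y qy Dy.
apply: (mulfI (expf_neq0 K qy)); rewrite mulr0 -(vanish y Dy) rmorph_sum /=.
rewrite mulr_sumr; apply: eq_bigr => e _.
by rewrite mevalZ mulrCA (meval_homogenize (szK e) qy).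
Qed.

End Elimination.

Lemma torus_diag_row_free (n : nat) (x : 'cV[C]_n) :
  in_torus x -> row_free (diag_mx x^T).
Proof.
move=> tx; rewrite row_free_unit unitmxE det_diag unitfE.
by apply/prodf_neq0 => i _; rewrite mxE; apply: tx.
Qed.

(* Given a nondegenerate solution, a left
   inverse S of Jg diag(x) there makes D = det(Mp S) a nonzero polynomial;
   degenerate solutions lie over {D = 0}, whose image under param/q lies in
   a hypersurface {P = 0} of the parameter space; U = {P != 0} works. *)
Lemma nondegenerate_of_parametrization (m1 m2 n t : nat)
  (g : 'cV[C]_m2 -> 'cV[C]_n -> 'cV[C]_t)
  (Jg : 'cV[C]_m2 -> 'cV[C]_n -> 'M[C]_(t, n))
  (param : 'I_m2 -> {mpoly C[m1]}) (q : {mpoly C[m1]}) (Mp : 'M[{mpoly C[m1]}]_(t, n)) :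
  ((t <= n)%N -> (m1 <= m2)%N) ->
  (forall alpha x, in_torus x -> g alpha x = 0 ->
     exists y : 'I_m1 -> C, [/\ q.@[y] != 0,
       forall i, alpha i 0 = (param i).@[y] / q.@[y] &
       map_mx (meval y) Mp = Jg alpha x *m diag_mx x^T]) ->
  generically_nondegenerate g Jg.
Proof.
move=> hm hpar [a0 [x0 [tx0 [g0 nd0]]]].
have [y0 [_ _ M0]] := hpar _ _ tx0 g0.
have m12 : (m1 <= m2)%N by apply: hm; rewrite -[X in (X <= _)%N]nd0 rank_leq_col.
have : row_free (Jg a0 x0 *m diag_mx x0^T).
  by rewrite /row_free mxrankMfree ?torus_diag_row_free // nd0.
case/row_freeP => S HS.
pose D := \det (Mp *m map_mx (@mpolyC m1 C) S).
have evD y : D.@[y] = \det (map_mx (meval y) Mp *m S).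
  rewrite /D -det_map_mx map_mxM; congr (\det (_ *m _)).
  by apply/matrixP => i j; rewrite !mxE; apply: mevalC.
have D0 : D != 0.
  by apply: contra_neq (oner_neq0 C) => D0; move: (evD y0); rewrite D0 meval0 M0 HS det1 => ->.
have [P [P0 HP]] := @image_in_hypersurface C _ _ param q D m12 D0.
exists (fun a : 'cV[C]_m2 => P.@[fun i => a i 0] != 0); split.
  by exists [:: P] => a; rewrite /= orbF.
split.
  have [v hv] := mpoly_nonroot P0.
  by exists (\col_i v i); rewrite (@meval_eq _ _ _ v) // => i; rewrite mxE.
move=> a Ua x tx gx; have [y [qy pa My]] := hpar _ _ tx gx.
apply/eqP; apply: contraNT Ua => hr; apply/eqP.
rewrite (@meval_eq _ _ _ (fun i => (param i).@[y] / q.@[y])) => [|i]; last exact: pa.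
apply: HP => //; rewrite evD My; apply/eqP; rewrite -[_ == 0]negbK -unitfE -unitmxE.
rewrite -row_free_unit; apply: contra hr => /eqP full.
rewrite eqn_leq rank_leq_row -[X in (X <= _)%N]full -mulmxA.
exact: mxrankM_maxl.
Qed.
Arguments nondegenerate_of_parametrization {m1 m2 n t g Jg}.

Lemma kernel_coords {F : fieldType} {s r : nat} {N : 'M[F]_(s, r)} {lam : 'cV[F]_r} :
  N *m lam = 0 -> exists mu : 'rV_(\rank (kermx N^T)), mu *m row_base (kermx N^T) = lam^T.
Proof.
move=> h; have : (lam^T <= kermx N^T)%MS by apply/sub_kermxP; rewrite -trmx_mul h trmx0.
by rewrite -(eq_row_base (kermx N^T)) => /submxP [mu ->]; exists mu.
Qed.

Lemma kernel_dim {F : fieldType} {s r : nat} {N : 'M[F]_(s, r)} : \rank N = s ->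
  \rank (kermx N^T) = (r - s)%N /\ (s <= r)%N.
Proof. by move=> hN; rewrite mxrank_ker mxrank_tr hN -{3}hN rank_leq_col. Qed.

Lemma expz_nat (R : unitRingType) (x : R) (z : int) : 0 <= z -> x ^ z = x ^+ `|z|%N.
Proof. by move=> hz; rewrite -{1}(gez0_abs hz). Qed.

Lemma toric_jacobian (s r n : nat) (N : 'M[C]_(s, r)) (B : 'M[int]_(n, r))
    (kappa : 'cV[C]_r) (x : 'cV[C]_n) :
  in_torus x ->
  Jf N B kappa x *m diag_mx x^T =
  \matrix_(l, k) \sum_(j < r) N l j * (B k j)%:~R * (kappa j 0 * monvec B x j 0).
Proof.
move=> tx; apply/matrixP => l k; rewrite mul_mx_diag !mxE mulr_suml.
apply: eq_bigr => j _; rewrite /dmon !mxE [in RHS](bigD1 k) //=.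
have -> : x k 0 ^ B k j = x k 0 ^ (B k j - 1) * x k 0.
  by rewrite -{3}(expr1z (x k 0)) -expfzDr ?tx // subrK.
by ring.
Qed.

(* The variables are
   split as (mu, z) in C^rk x C^mx; Kb is a basis of ker N, so that
   kappa o x^B = mu Kb = lpol, and xp expresses x as polynomials in the
   variables.  With aB the largest |b_ij|, qpol = prod_i xp_i^aB clears the
   denominators of the Laurent monomials x^(-B_j), so kappa_j = kpol_j / qpol;
   and the scaled Jacobians Jf diag(x), W diag(x) become the polynomial
   matrices Mtop = N diag(lpol) B^T and Wmat. *)
Section Parametrization.
Variables (s r n rk mx : nat) (N : 'M[C]_(s, r)) (B : 'M[int]_(n, r))
  (Kb : 'M[C]_(rk, r)) (xp : 'I_n -> {mpoly C[rk + mx]}).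

Definition lpol (j : 'I_r) : {mpoly C[rk + mx]} :=
  \sum_(i < rk) 'X_(lshift mx i) * (Kb i j)%:MP.
Definition aB : nat := \max_(i < n) \max_(j < r) `|B i j|%N.
Definition qpol : {mpoly C[rk + mx]} := \prod_(i < n) xp i ^+ aB.
Definition kpol (j : 'I_r) : {mpoly C[rk + mx]} :=
  lpol j * \prod_(i < n) xp i ^+ `|aB%:Z - B i j|%N.
Definition Mtop : 'M[{mpoly C[rk + mx]}]_(s, n) :=
  \matrix_(l, k) \sum_(j < r) (N l j * (B k j)%:~R)%:MP * lpol j.
Definition Wmat {d : nat} (W : 'M[C]_(d, n)) : 'M[{mpoly C[rk + mx]}]_(d, n) :=
  \matrix_(l, k) ((W l k)%:MP * xp k).

Lemma lpol_eval (mu : 'rV[C]_rk) (z : 'rV[C]_mx) j :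
  (lpol j).@[fun i => row_mx mu z 0 i] = (mu *m Kb) 0 j.
Proof.
rewrite /lpol rmorph_sum /= !mxE; apply: eq_bigr => i _.
by rewrite mevalM mevalXU mevalC row_mxEl.
Qed.

Section AtSolution.
Variables (y : 'I_(rk + mx) -> C) (x : 'cV[C]_n) (kappa : 'cV[C]_r).
Hypotheses (tx : in_torus x) (hx : forall i, (xp i).@[y] = x i 0)
  (hl : forall j, (lpol j).@[y] = kappa j 0 * monvec B x j 0).

Lemma qpol_eval : qpol.@[y] != 0.
Proof.
rewrite /qpol rmorph_prod /=; apply/prodf_neq0 => i _.
by rewrite rmorphXn /= hx expf_neq0 ?tx.
Qed.

(* The rate constants are recovered as kpol/qpol, since qpol/x^(B_j) is the
   monomial prod_i x_i^(aB - b_ij) with nonnegative exponents. *)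
Lemma kpol_eval j : kappa j 0 = (kpol j).@[y] / qpol.@[y].
Proof.
apply: (mulIf qpol_eval); rewrite divfK ?qpol_eval //.
rewrite /kpol mevalM hl /qpol !rmorph_prod /= -mulrA; congr (_ * _).
rewrite !mxE -big_split /=; apply: eq_bigr => i _.
rewrite !rmorphXn /= hx.
have hb : B i j <= aB%:Z.
  apply: (le_trans (ler_norm _)); rewrite -abszE lez_nat.
  by apply: leq_trans (leq_bigmax i); apply: (leq_bigmax j).
by rewrite -expz_nat ?subr_ge0 // -expfzDr ?tx // addrCA subrr addr0.
Qed.

Lemma Mtop_eval : map_mx (meval y) Mtop = Jf N B kappa x *m diag_mx x^T.
Proof.
rewrite toric_jacobian //; apply/matrixP => l k; rewrite !mxE rmorph_sum /=.
by apply: eq_bigr => j _; rewrite mevalM mevalC hl.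
Qed.

Lemma Wmat_eval (d : nat) (W : 'M[C]_(d, n)) :
  map_mx (meval y) (Wmat W) = W *m diag_mx x^T.
Proof.
by apply/matrixP => l k; rewrite mul_mx_diag !mxE mevalM mevalC hx.
Qed.

End AtSolution.
End Parametrization.
Arguments lpol {r rk mx} Kb j.
Arguments qpol {r n rk mx} B xp.
Arguments kpol {r n rk mx} B Kb xp j.
Arguments Mtop {s r n rk mx} N B Kb.
Arguments Wmat {n rk mx} xp {d} W.
Arguments lpol_eval {r rk mx Kb}.
Arguments qpol_eval {r n rk mx B xp y x}.
Arguments kpol_eval {r n rk mx B Kb xp y x kappa}.
Arguments Mtop_eval {s r n rk mx N B Kb y x kappa}.
Arguments Wmat_eval {n rk mx xp y x}.

Section ThreeSystems.
Variables (s r n d : nat) (N : 'M[C]_(s, r)) (W : 'M[C]_(d, n)) (B : 'M[int]_(n, r)).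
Hypotheses (rankN : \rank N = s) (dim_d : d = (n - s)%N).

Let rk := \rank (kermx N^T).
Let Kb := row_base (kermx N^T).

(* The system F with parameters (kappa, c): a torus solution is determined by
   y = (mu, x) in C^(r - s) x C^n via kappa o x^B = mu Kb and c = W x. *)
Lemma F_generically_nondegenerate :
  generically_nondegenerate
    (fun alpha : 'cV[C]_(r + d) => Fsys N W B (usubmx alpha) (dsubmx alpha))
    (fun alpha : 'cV[C]_(r + d) => JF N W B (usubmx alpha)).
Proof.
have [rkN sr] := kernel_dim rankN.
pose xp (k : 'I_n) : {mpoly C[rk + n]} := 'X_(rshift rk k).
pose q := qpol B xp.
pose param (i : 'I_(r + d)) := match split i with
  | inl j => kpol B Kb xp j
  | inr l => (\sum_(k < n) (W l k)%:MP * xp k) * q end.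
apply: (nondegenerate_of_parametrization param q (col_mx (Mtop N B Kb) (Wmat xp W))).
  by rewrite /rk rkN; lia.
move=> a x tx /eqP; rewrite col_mx_eq0 subr_eq0 => /andP[/eqP hf /eqP hw].
have [mu hmu] := kernel_coords hf.
pose y i := row_mx mu x^T 0 i.
have hx k : (xp k).@[y] = x k 0 by rewrite mevalXU /y row_mxEr mxE.
have hl j : (lpol Kb j).@[y] = usubmx a j 0 * monvec B x j 0.
  by rewrite lpol_eval hmu !mxE.
exists y; split; first exact: qpol_eval tx hx.
  move=> i; rewrite /param -{1}[a]vsubmxK; case: splitP => j hij.
    by rewrite (_ : i = lshift d j) ?col_mxEu ?(kpol_eval tx hx hl) //; apply: val_inj.
  rewrite (_ : i = rshift r j) ?col_mxEd; last exact: val_inj.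
  rewrite mevalM mulfK ?(qpol_eval tx hx) // -hw !mxE rmorph_sum /=.
  by apply: eq_bigr => k _; rewrite mevalM mevalC hx.
by rewrite map_col_mx mul_col_mx (Mtop_eval tx hl) (Wmat_eval hx).
Qed.

(* The system F_c for a fixed c, assuming a torus solution x0 exists: torus
   solutions are x = x0 + z Kw with Kw a basis of ker W, so they are
   determined by y = (mu, z) in C^(r - s) x C^s. *)
Lemma Fc_generically_nondegenerate (c : 'cV[C]_d) : \rank W = d ->
  generically_nondegenerate
    (fun kappa : 'cV[C]_r => Fsys N W B kappa c)
    (fun kappa : 'cV[C]_r => JF N W B kappa).
Proof.
move=> rankW ex_sol; have [a0 [x0 [_ [sol0 _]]]] := ex_sol; move: ex_sol.
have hw0 : W *m x0 = c.
  by move/eqP: sol0; rewrite col_mx_eq0 subr_eq0 => /andP[_ /eqP].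
have [rkN sr] := kernel_dim rankN; have [rkW _] := kernel_dim rankW.
pose Kw := row_base (kermx W^T).
pose xp (k : 'I_n) : {mpoly C[rk + \rank (kermx W^T)]} :=
  (x0 k 0)%:MP + \sum_(i < \rank (kermx W^T)) 'X_(rshift rk i) * (Kw i k)%:MP.
apply: (nondegenerate_of_parametrization (kpol B Kb xp) (qpol B xp)
          (col_mx (Mtop N B Kb) (Wmat xp W))).
  by rewrite /rk rkN rkW; lia.
move=> kappa x tx /eqP; rewrite col_mx_eq0 subr_eq0 => /andP[/eqP hf /eqP hw].
have [mu hmu] := kernel_coords hf.
have [z hz] : exists z, z *m Kw = (x - x0)^T.
  by apply: kernel_coords; rewrite mulmxBr hw hw0 subrr.
pose y i := row_mx mu z 0 i.
have hx k : (xp k).@[y] = x k 0.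
  rewrite mevalD mevalC rmorph_sum /=.
  have -> : \sum_i ('X_(rshift rk i) * (Kw i k)%:MP).@[y] = (z *m Kw) 0 k.
    by rewrite mxE; apply: eq_bigr => i _; rewrite mevalM mevalXU mevalC /y row_mxEr.
  by rewrite hz !mxE addrCA subrr addr0.
have hl j : (lpol Kb j).@[y] = kappa j 0 * monvec B x j 0.
  by rewrite lpol_eval hmu !mxE.
exists y; split; [exact: qpol_eval tx hx | exact: kpol_eval tx hx hl |].
by rewrite map_col_mx mul_col_mx (Mtop_eval tx hl) (Wmat_eval hx).
Qed.

(* The square system f (s = n): torus solutions are determined by
   y = (mu, x) in C^(r - s) x C^n via kappa o x^B = mu Kb. *)
Lemma f_generically_nondegenerate : s = n ->
  generically_nondegenerate
    (fun kappa : 'cV[C]_r => fsys N B kappa)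
    (fun kappa : 'cV[C]_r => Jf N B kappa).
Proof.
move=> sn; have [rkN sr] := kernel_dim rankN.
pose xp (k : 'I_n) : {mpoly C[rk + n]} := 'X_(rshift rk k).
apply: (nondegenerate_of_parametrization (kpol B Kb xp) (qpol B xp) (Mtop N B Kb)).
  by rewrite /rk rkN; lia.
move=> kappa x tx hf; have [mu hmu] := kernel_coords hf.
pose y i := row_mx mu x^T 0 i.
have hx k : (xp k).@[y] = x k 0 by rewrite mevalXU /y row_mxEr mxE.
have hl j : (lpol Kb j).@[y] = kappa j 0 * monvec B x j 0.
  by rewrite lpol_eval hmu !mxE.
by exists y; split; [exact: qpol_eval tx hx | exact: kpol_eval tx hx hl | exact: Mtop_eval].
Qed.

End ThreeSystems.

Theorem mainTheorem10 (s r n d : nat) (N : 'M[C]_(s, r)) (W : 'M[C]_(d, n))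
  (B : 'M[int]_(n, r)) :
  \rank N = s -> \rank W = d -> d = (n - s)%N ->
  [/\ generically_nondegenerate
        (fun alpha : 'cV[C]_(r + d) => Fsys N W B (usubmx alpha) (dsubmx alpha))
        (fun alpha : 'cV[C]_(r + d) => JF N W B (usubmx alpha)),
      (forall c : 'cV[C]_d,
        generically_nondegenerate
          (fun kappa : 'cV[C]_r => Fsys N W B kappa c)
          (fun kappa : 'cV[C]_r => JF N W B kappa))
    & (s = n ->
        generically_nondegenerate
          (fun kappa : 'cV[C]_r => fsys N B kappa)
          (fun kappa : 'cV[C]_r => Jf N B kappa))].
Proof.
move=> rankN rankW dim_d; split.
- exact: F_generically_nondegenerate.
- by move=> c; apply: Fc_generically_nondegenerate.
- exact: f_generically_nondegenerate.
Qed.
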